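(* There is no finite group $G$ with $\pi_e(G)\subseteq\{1,2,3,4,6\}$ having precisely four cyclic subgroups $H_1,H_2,H_3,H_4$ of order $6$ such that $|H_1\cap H_2|=3$ and $|H_3\cap H_4|=3$.
   Context: $\pi_e(G)$ is the set of orders of elements of $G$. *)

From mathcomp Require Import all_boot all_fingroup all_solvable.
Set Implicit Arguments. Unset Strict Implicit. Unset Printing Implicit Defensive.
Local Open Scope group_scope.

Definition elt_orders (gT : finGroupType) (G : {set gT}) : pred nat :=
  fun n => [exists x in G, #[x] == n].

(** Fix [x] of order 3. The map [t |-> <[t * x]>] is a bijection from the
    involutions of the centraliser of [x] onto the cyclic subgroups of order 6
    containing [x], and a group of even order has an odd number of
    involutions (inversion pairs off the other non-identity elements), so the
    number of such subgroups is 0 or odd. A generator [x] of [H1 :&: H2] lies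
    in [H1] and [H2], hence in at least three of the four subgroups, and
    likewise for a generator [y] of [H3 :&: H4]. Two triples inside a set of
    four share a subgroup, whose unique subgroup of order 3 is then
    [<[x]> = <[y]>]; so all four subgroups contain [x], an even number. *)

From mathcomp Require Import all_boot all_fingroup all_solvable.
Set Implicit Arguments. Unset Strict Implicit. Unset Printing Implicit Defensive.
Local Open Scope group_scope.

Section CyclicSubgroupsOfOrder6.

Variable gT : finGroupType.
Implicit Types (G H K : {group gT}) (x y t s : gT).

Definition involutions (A : {set gT}) := [set t in A | #[t] == 2%N].

Definition cyclic_subgroups (A : {set gT}) (n : nat) : {set {group gT}} :=
  [set H : {group gT} | [&& H \subset A, cyclic H & #|H| == n]].

Lemma card_self_inverse_mod2 G : #|G| = #|[set y in G | y^-1 == y]| %[mod 2].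
Proof.
(* Inversion generates a 2-group of permutations whose fixed points are
   the self-inverse elements; apply the mod-p lemma for p-group actions. *)
pose v := perm (@invg_inj gT).
have vE y : v y = y^-1 by rewrite permE.
have two_v : 2.-group <[v]>.
  have v2 : v ^+ 2 = 1 by apply/permP => y; rewrite permM !vE invgK perm1.
  rewrite /pgroup -orderE; apply: pnat_dvd (pnat_id (isT : prime 2)).
  by rewrite order_dvdn v2.
have actsG : [acts <[v]>, on G | 'P].
  by rewrite cycle_subG; apply/astabsP => y /=; rewrite apermE vE groupV.
rewrite (pgroup_fix_mod two_v actsG) afix_cycle.
by congr (_ %% 2); apply: eq_card => y; rewrite !inE sub1set inE /= apermE vE.
Qed.

Lemma odd_card_involutions G : odd #|involutions G| = ~~ odd #|G|.
Proof.
have selfinvE : [set y in G | y^-1 == y] = 1 |: involutions G.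
  apply/setP => y; rewrite in_setU1 !inE eq_invg_mul -expg2 -order_dvdn.
  case: (eqVneq y 1) => [->|y1]; first by rewrite group1 order1.
  congr (_ && _); apply/idP/eqP => [|-> //].
  by apply/prime_nt_dvdP; rewrite ?order_eq1.
have := card_self_inverse_mod2 G.
rewrite selfinvE cardsU1 !inE order1 andbF /= !modn2 => /(congr1 odd).
by rewrite !oddb oddD => ->; rewrite negbK.
Qed.

Lemma cycle_eq_in_cyclic H x y :
  cyclic H -> x \in H -> y \in H -> #[x] = #[y] -> <[x]> = <[y]>.
Proof.
move=> cH xH yH oxy.
by apply/eqP; rewrite (eq_subG_cyclic cH) ?cycle_subG // -!orderE oxy.
Qed.

Lemma cyclicI_order_elt H K :
  cyclic H -> exists2 x, x \in H :&: K & #[x] = #|H :&: K|.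
Proof.
move=> cH; have /cyclicP[x defHK] : cyclic (H :&: K) by apply: cyclicS cH; apply: subsetIl.
by exists x; rewrite defHK ?cycle_id // -orderE.
Qed.

Section ThroughAnElementOfOrder3.

Variables (G : {group gT}) (x : gT).
Hypotheses (xG : x \in G) (ox : #[x] = 3%N).

Lemma involution_centralising_order3 t :
  t \in involutions 'C_G[x] -> [/\ t \in G, #[t] = 2%N, commute t x & #[t * x] = 6%N].
Proof.
rewrite inE => /andP[/setIP[tG /cent1P ctx] /eqP ot].
by split=> //; rewrite (orderM ctx) ot ox.
Qed.

Lemma cyclic_subgroups6_through_order3 :
  [set H in cyclic_subgroups G 6 | x \in H]
    = [set <[t * x]>%G | t in involutions 'C_G[x]].
Proof.
apply/setP => H; rewrite !inE; apply/idP/imsetP.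
- case/andP=> /and3P[sHG /cyclicP[h defH] /eqP oH] xH.
  have oh : #[h] = 6%N by rewrite orderE -defH.
  have h3H : h ^+ 3 \in H by rewrite defH mem_cycle.
  have cx : commute (h ^+ 3) x.
    by apply: (centsP (cyclic_abelian (cycle_cyclic h))); rewrite -?defH.
  have inv : h ^+ 3 \in involutions 'C_G[x].
    by rewrite inE in_setI (subsetP sHG) //= orderXdiv ?oh // andbT; apply/cent1P.
  exists (h ^+ 3) => //; apply/val_inj/eqP; rewrite /= eq_sym eqEcard.
  have [_ _ _ otx] := involution_centralising_order3 inv.
  by rewrite oH -orderE otx cycle_subG groupM.
- case=> t inv ->; have [tG ot ctx otx] := involution_centralising_order3 inv.
  rewrite /= cycle_subG groupM // cycle_cyclic -orderE otx /=.
  by rewrite -cycle_subG ctx cycleMsub // ot ox.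
Qed.

Lemma card_cyclic_subgroups6_through_order3 :
  #|[set H in cyclic_subgroups G 6 | x \in H]| = #|involutions 'C_G[x]|.
Proof.
rewrite cyclic_subgroups6_through_order3 card_in_imset // => t s tinv sinv /= eqtsx.
have [_ ot ctx _] := involution_centralising_order3 tinv.
have [_ os csx _] := involution_centralising_order3 sinv.
have ts : <[t]> = <[s]>.
  apply: (@cycle_eq_in_cyclic <[s * x]>%G); rewrite ?cycle_cyclic ?ot ?os //.
    by rewrite -(congr1 val eqtsx) -cycle_subG cycleMsub // ot ox.
  by rewrite -cycle_subG cycleMsub // os ox.
have : t \in <[s]> by rewrite -ts cycle_id.
rewrite cycle2g // !inE => /predU1P[t1|/eqP //].
by rewrite t1 order1 in ot.
Qed.

Lemma odd_card_cyclic_subgroups6_through_order3 :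
  (0 < #|[set H in cyclic_subgroups G 6 | x \in H]|)%N ->
  odd #|[set H in cyclic_subgroups G 6 | x \in H]|.
Proof.
rewrite card_cyclic_subgroups6_through_order3 odd_card_involutions.
case/card_gt0P=> t tinv; have [_ ot _ _] := involution_centralising_order3 tinv.
have : (2 %| #|'C_G[x]|)%N by rewrite -ot order_dvdG //; case/setIdP: tinv.
by rewrite dvdn2.
Qed.

End ThroughAnElementOfOrder3.

Lemma order3_in_meet_cyclic_subgroups6 G A B :
  A \in cyclic_subgroups G 6 -> B \in cyclic_subgroups G 6 -> A != B ->
  #|A :&: B| = 3%N ->
  exists x, [/\ #[x] = 3%N, x \in A, x \in B
              & 3 <= #|[set H in cyclic_subgroups G 6 | x \in H]|]%N.
Proof.
move=> SA SB neqAB oAB; move: (SA); rewrite inE => /and3P[sAG cA _].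
have [x /setIP[xA xB] ox] := cyclicI_order_elt B cA; rewrite oAB in ox.
exists x; split=> //.
have two_through : (2 <= #|[set H in cyclic_subgroups G 6 | x \in H]|)%N.
  apply: (@leq_trans #|[set A; B]|); first by rewrite cards2 neqAB.
  apply: subset_leq_card; apply/subsetP => H.
  by case/set2P=> ->; rewrite inE ?SA ?SB.
have := odd_card_cyclic_subgroups6_through_order3 (subsetP sAG x xA) ox (ltnW two_through).
by move: two_through; case: #|_| => [|[|[|]]].
Qed.

End CyclicSubgroupsOfOrder6.

Theorem theorem3p4 (gT : finGroupType) (G : {group gT})
  (H1 H2 H3 H4 : {group gT}) :
  {subset elt_orders G <= [:: 1; 2; 3; 4; 6]%N} ->
  (* H1,...,H4 are cyclic subgroups of G of order 6, pairwise distinct *)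
  (forall H : {group gT}, H \in [:: H1; H2; H3; H4] ->
     [/\ H \subset G, cyclic H & #|H| = 6%N]) ->
  uniq [:: H1; H2; H3; H4] ->
  (* and they are all the cyclic subgroups of order 6 of G *)
  (forall H : {group gT}, H \subset G -> cyclic H -> #|H| = 6%N ->
     H \in [:: H1; H2; H3; H4]) ->
  #|H1 :&: H2| = 3%N -> #|H3 :&: H4| = 3%N -> False.
Proof.
move=> _ H6 uniqH allH oH12 oH34; set S := cyclic_subgroups G 6.
have memS : S =i [:: H1; H2; H3; H4].
  move=> H; rewrite inE; apply/and3P/idP => [[sHG cH /eqP oH] | /H6[-> -> ->]] //.
  exact: allH.
have cardS : #|S| = 4%N by rewrite (eq_card memS) (card_uniqP uniqH).
have [S1 S2 S3 S4] : [/\ H1 \in S, H2 \in S, H3 \in S & H4 \in S].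
  by rewrite !memS !inE !eqxx !orbT.
have n12 : H1 != H2 by apply: contraTneq uniqH => ->; rewrite /= mem_head.
have n34 : H3 != H4 by apply: contraTneq uniqH => ->; rewrite /= mem_head !andbF.
have [x [ox x1 x2 Sx3]] := order3_in_meet_cyclic_subgroups6 S1 S2 n12 oH12.
have [y [oy y3 y4 Sy3]] := order3_in_meet_cyclic_subgroups6 S3 S4 n34 oH34.
set Sx := [set H in S | x \in H] in Sx3; set Sy := [set H in S | y \in H] in Sy3.
have [H /setIP[]] : exists H, H \in Sx :&: Sy.
  apply/set0Pn; rewrite -cards_eq0 -lt0n.
  have : (#|Sx :|: Sy| <= #|S|)%N.
    by apply: subset_leq_card; rewrite /Sx /Sy !setIdE subUset !subsetIl.
  rewrite cardS -(leq_add2r #|Sx :&: Sy|) cardsUI.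
  by case: #|_ :&: _| => //; rewrite addn0 => /(leq_trans (leq_add Sx3 Sy3)).
rewrite !inE => /andP[SH xH] /andP[_ yH].
have exy : <[x]> = <[y]>.
  by move: SH => /and3P[_ cH _]; apply: (cycle_eq_in_cyclic cH); rewrite ?ox.
have SxE : Sx = S.
  apply/setP => K; rewrite inE andb_idr // memS !inE.
  by case/or4P=> /eqP->; rewrite // -cycle_subG exy cycle_subG.
have xG : x \in G by move: S1; rewrite inE => /and3P[/subsetP->].
have := odd_card_cyclic_subgroups6_through_order3 xG ox.
by rewrite -/S -/Sx SxE cardS => /(_ isT).
Qed.
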